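(* There is $\mathcal{F}\subseteq[\mathbb{N}]^{<\omega}$ such that there is no Borel function $S:2^{\mathbb{N}}\to 2^{\mathbb{N}}$ satisfying, for every infinite $x\subseteq\mathbb{N}$, $S(x)\subseteq x$, $S(x)$ infinite, and $S(x)\in hom(\mathcal{F})$.
   Context: Subsets of $\mathbb{N}$ are identified with elements of $2^{\mathbb{N}}$. For finite $s$ and $t\subseteq\mathbb{N}$ (finite or infinite), $s\sqsubseteq t$ ($s$ is an initial segment of $t$) means $s=t\cap\{0,1,\dots,n\}$ for some $n\in\mathbb{N}$. For $\mathcal{F}\subseteq[\mathbb{N}]^{<\omega}$, a set $y\subseteq\mathbb{N}$ is $\mathcal{F}$-homogeneous if either (a) for every infinite $z\subseteq y$ there is $s\in\mathcal{F}$ with $s\sqsubseteq z$, or (b) no finite subset of $y$ belongs to $\mathcal{F}$. $hom(\mathcal{F})$ denotes the set of infinite $\mathcal{F}$-homogeneous sets. *)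

(* Subsets of N are identified with elements of 2^N = nat -> bool. *)
From Stdlib Require Import Arith.

Definition cantor := nat -> bool.

Definition infinite_set (x : cantor) : Prop :=
  forall n : nat, exists m : nat, n <= m /\ x m = true.

Definition finite_set (x : cantor) : Prop :=
  exists n : nat, forall m : nat, x m = true -> m < n.

Definition subset (y x : cantor) : Prop :=
  forall m : nat, y m = true -> x m = true.

Definition init_seg (s t : cantor) : Prop :=
  exists n : nat, forall m : nat, s m = andb (t m) (Nat.leb m n).

Definition family_of_finite (F : cantor -> Prop) : Prop :=
  forall s, F s -> finite_set s.

Definition homogeneous (F : cantor -> Prop) (y : cantor) : Prop :=
  (forall z, subset z y -> infinite_set z -> exists s, F s /\ init_seg s z)
  \/ (forall s, finite_set s -> subset s y -> ~ F s).

Definition in_hom (F : cantor -> Prop) (y : cantor) : Prop :=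
  infinite_set y /\ homogeneous F y.

(* Borel subsets of 2^N: the sigma-algebra generated by the subbasic
   clopen sets {x | x n = b}. *)
Inductive borel : (cantor -> Prop) -> Prop :=
| borel_basic : forall (n : nat) (b : bool), borel (fun x => x n = b)
| borel_compl : forall A, borel A -> borel (fun x => ~ A x)
| borel_union : forall A : nat -> cantor -> Prop,
    (forall i, borel (A i)) -> borel (fun x => exists i, A i x)
| borel_ext : forall A B, borel A -> (forall x, A x <-> B x) -> borel B.

Definition borel_fun (S : cantor -> cantor) : Prop :=
  forall B, borel B -> borel (fun x => B (S x)).

(* The set [diag] of those y for which some f : nat -> nat passes the test
   [consistent_below y f k] at every level k is analytic but not Borel: f guesses
   the truth values of all subcodes of a Borel code, and [enc c] lies in [diag] iff
   the code c fails at [enc c] itself.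
   Each y is coded continuously by the infinite set [code_set y] of the points
   <v, y restricted to [window v]>.  The family [unwitnessed] consists of the finite
   sets {<t j, y restricted to [window (t j)]> | j < k}, t increasing, for which no f
   bounded by t passes the test up to level k.  If an infinite Z inside [code_set y]
   has no finite subset in the family, Koenig's lemma puts y in [diag]; if y is in
   [diag] with witness b, every such Z has an infinite subset growing faster than b,
   and none of its finite subsets is in the family.  So for a homogeneous Borel
   selector S, y is outside [diag] iff some finite subset of S (code_set y) is in the
   family, a Borel condition on y. *)

From Stdlib Require Import Arith Lia Bool List Cantor Classical ClassicalEpsilon.
Import ListNotations.

Definition npair (a b : nat) : nat := Cantor.to_nat (a, b).
Definition nfst (n : nat) : nat := fst (Cantor.of_nat n).
Definition nsnd (n : nat) : nat := snd (Cantor.of_nat n).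

Lemma nfst_npair a b : nfst (npair a b) = a.
Proof. unfold nfst, npair; rewrite Cantor.cancel_of_to; reflexivity. Qed.

Lemma nsnd_npair a b : nsnd (npair a b) = b.
Proof. unfold nsnd, npair; rewrite Cantor.cancel_of_to; reflexivity. Qed.

Hint Rewrite nfst_npair nsnd_npair : npair.

Lemma npair_inj a b a' b' : npair a b = npair a' b' -> a = a' /\ b = b'.
Proof. unfold npair; intros E; apply Cantor.to_nat_inj in E; injection E; auto. Qed.

Lemma npair_ge a b : a + b <= npair a b.
Proof. pose proof (Cantor.to_nat_non_decreasing a b); unfold npair; lia. Qed.

Lemma npair_le_mono a b a' b' : a <= a' -> b <= b' -> npair a b <= npair a' b'.
Proof.
  intros. unfold npair.
  pose proof (Cantor.to_nat_spec a b); pose proof (Cantor.to_nat_spec a' b').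
  assert ((b + a) * S (b + a) <= (b' + a') * S (b' + a')) by (apply Nat.mul_le_mono; lia).
  lia.
Qed.

Lemma npair_nfst_nsnd n : npair (nfst n) (nsnd n) = n.
Proof. unfold npair, nfst, nsnd; rewrite <- surjective_pairing; apply Cantor.cancel_to_of. Qed.

Lemma nfst_le n : nfst n <= n.
Proof. rewrite <- (npair_nfst_nsnd n) at 2; pose proof (npair_ge (nfst n) (nsnd n)); lia. Qed.

Lemma nsnd_le n : nsnd n <= n.
Proof. rewrite <- (npair_nfst_nsnd n) at 2; pose proof (npair_ge (nfst n) (nsnd n)); lia. Qed.

Definition upd {X : Type} (f : nat -> X) (n : nat) (x : X) : nat -> X :=
  fun q => if q =? n then x else f q.

Definition agree_below (N : nat) (y y' : cantor) : Prop := forall q, q < N -> y q = y' q.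

Lemma borel_or A B : borel A -> borel B -> borel (fun x => A x \/ B x).
Proof.
  intros HA HB.
  apply borel_ext with (A := fun x => exists i, (match i with 0 => A | _ => B end) x).
  - apply borel_union; intros [|i]; assumption.
  - intros x; split.
    + intros [[|i] H]; auto.
    + intros [H|H]; [exists 0 | exists 1]; exact H.
Qed.

Lemma borel_and A B : borel A -> borel B -> borel (fun x => A x /\ B x).
Proof.
  intros HA HB. apply borel_ext with (A := fun x => ~ (~ A x \/ ~ B x)).
  - apply borel_compl, borel_or; apply borel_compl; assumption.
  - intros x; tauto.
Qed.

Lemma borel_const (P : Prop) : borel (fun _ => P).
Proof.
  assert (Htrue : borel (fun _ => True)).
  { apply borel_ext with (A := fun x => x 0 = true \/ x 0 = false).
    - apply borel_or; apply borel_basic.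
    - intros x; destruct (x 0); tauto. }
  destruct (classic P) as [HP|HP].
  - apply borel_ext with (A := fun _ => True); tauto.
  - apply borel_ext with (A := fun _ => ~ True); [apply borel_compl, Htrue | tauto].
Qed.

Lemma borel_finitely_determined N (P : cantor -> Prop) :
  (forall y y', agree_below N y y' -> P y -> P y') -> borel P.
Proof.
  revert P; induction N as [|N IHN]; intros P HP.
  - destruct (classic (exists y, P y)) as [[y0 Hy0]|Hnone].
    + apply borel_ext with (A := fun _ => True); [apply borel_const|].
      intros y; split; [intros _ | tauto]. apply (HP y0); [intros q Hq; lia | exact Hy0].
    + apply borel_ext with (A := fun _ => False); [apply borel_const|].
      intros y; split; [tauto | intros Hy; apply Hnone; eauto].
  - assert (Hfix : forall b y, y N = b -> P y <-> P (upd y N b)).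
    { intros b y Hb; split; apply HP; intros q Hq; unfold upd;
        destruct (Nat.eqb_spec q N); subst; auto. }
    assert (Hb : forall b, borel (fun y => P (upd y N b))).
    { intros b; apply IHN; intros y y' Hyy'; apply HP.
      intros q Hq; unfold upd; destruct (Nat.eqb_spec q N); auto; apply Hyy'; lia. }
    apply borel_ext with
      (A := fun y => (y N = true /\ P (upd y N true)) \/ (y N = false /\ P (upd y N false))).
    + apply borel_or; apply borel_and; auto using borel_basic.
    + intros y; destruct (y N) eqn:E; rewrite <- (Hfix _ y E); intuition congruence.
Qed.

Lemma borel_fun_continuous (G : cantor -> cantor) :
  (forall m, exists N, forall y y', agree_below N y y' -> G y m = G y' m) -> borel_fun G.
Proof.
  intros HG B HB; induction HB as [n b| |A _ IH|A B _ IH HAB].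
  - destruct (HG n) as [N HN]. apply (borel_finitely_determined N).
    intros y y' Hyy' Hy; rewrite <- (HN y y' Hyy'); exact Hy.
  - apply borel_compl; assumption.
  - apply borel_union; assumption.
  - apply borel_ext with (A := fun x => A (G x)); auto.
Qed.

Inductive bcode : Type :=
| BBasic (n : nat) (b : bool)
| BCompl (c : bcode)
| BUnion (f : nat -> bcode).

Fixpoint bsat (c : bcode) (y : cantor) : Prop :=
  match c with
  | BBasic n b => y n = b
  | BCompl d => ~ bsat d y
  | BUnion f => exists i, bsat (f i) y
  end.

Lemma borel_has_code B : borel B -> exists c, forall y, B y <-> bsat c y.
Proof.
  intros HB; induction HB as [n b|A _ [c Hc]|A _ IH|A B _ [c Hc] HAB].
  - exists (BBasic n b); reflexivity.
  - exists (BCompl c); intros y; simpl; rewrite Hc; reflexivity.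
  - destruct (choice _ IH) as [f Hf].
    exists (BUnion f); intros y; simpl; split; intros [i Hi]; exists i; apply Hf; exact Hi.
  - exists c; intros y; rewrite <- HAB; apply Hc.
Qed.

(* Addresses list the branch indices from the node upwards; a complement node
   has every index pointing to its unique child. *)
Fixpoint subcode (c : bcode) (a : list nat) : option bcode :=
  match a with
  | [] => Some c
  | i :: a' =>
      match subcode c a' with
      | Some (BCompl d) => Some d
      | Some (BUnion f) => Some (f i)
      | _ => None
      end
  end.

Definition child (p i : nat) : nat := S (npair p i).

Fixpoint addr_index (a : list nat) : nat :=
  match a with [] => 0 | i :: a' => child (addr_index a') i end.

Lemma child_gt p i : p < child p i.
Proof. pose proof (npair_ge p i); unfold child; lia. Qed.

Lemma addr_index_inj a a' : addr_index a = addr_index a' -> a = a'.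
Proof.
  revert a'; induction a as [|i a IH]; intros [|i' a'] E; simpl in E;
    try discriminate; auto.
  injection E; intros E'; apply npair_inj in E' as [E1 E2]; subst; f_equal; auto.
Qed.

Definition code_at (c : bcode) (p : nat) : option bcode :=
  if excluded_middle_informative (exists a, addr_index a = p)
  then subcode c (epsilon (inhabits []) (fun a => addr_index a = p))
  else None.

Lemma code_at_index c a : code_at c (addr_index a) = subcode c a.
Proof.
  unfold code_at; destruct excluded_middle_informative as [Hex|Hno].
  - f_equal; apply addr_index_inj, (epsilon_spec (inhabits []) _ Hex).
  - exfalso; eauto.
Qed.

Lemma code_at_some c p d :
  code_at c p = Some d -> exists a, p = addr_index a /\ subcode c a = Some d.
Proof.
  unfold code_at; destruct excluded_middle_informative as [Hex|Hno]; [|discriminate].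
  intros E; eexists; split; [symmetry; apply (epsilon_spec (inhabits []) _ Hex) | exact E].
Qed.

Lemma code_at_root c : code_at c 0 = Some c.
Proof. exact (code_at_index c []). Qed.

Lemma code_at_compl c p d i :
  code_at c p = Some (BCompl d) -> code_at c (child p i) = Some d.
Proof.
  intros E; destruct (code_at_some _ _ _ E) as [a [-> Ha]].
  change (child (addr_index a) i) with (addr_index (i :: a)).
  rewrite code_at_index; simpl; rewrite Ha; reflexivity.
Qed.

Lemma code_at_union c p f i :
  code_at c p = Some (BUnion f) -> code_at c (child p i) = Some (f i).
Proof.
  intros E; destruct (code_at_some _ _ _ E) as [a [-> Ha]].
  change (child (addr_index a) i) with (addr_index (i :: a)).
  rewrite code_at_index; simpl; rewrite Ha; reflexivity.
Qed.

Definition code_label (d : bcode) : nat :=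
  match d with
  | BBasic n b => npair 3 (npair n (Nat.b2n b))
  | BCompl _ => npair 1 0
  | BUnion _ => npair 2 0
  end.

Definition label_at (c : bcode) (p : nat) : nat :=
  match code_at c p with Some d => code_label d | None => 0 end.

Definition enc (c : bcode) : cantor := fun q => nsnd q =? label_at c (nfst q).

Lemma enc_npair c p m : enc c (npair p m) = (m =? label_at c p).
Proof. unfold enc; rewrite nfst_npair, nsnd_npair; reflexivity. Qed.

(* A witness f guesses, at every node p, a label, a truth value and (at union
   nodes) a branch that makes the union true.  [node_ok] checks the guess against
   the labels listed in y and against the evaluation rules, as far as the children
   it involves satisfy [avail]. *)
Definition wlabel (f : nat -> nat) (p : nat) : nat := nfst (f p).
Definition wtruth (f : nat -> nat) (p : nat) : bool := nfst (nsnd (f p)) =? 1.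
Definition windex (f : nat -> nat) (p : nat) : nat := nsnd (nsnd (f p)).

Definition node_ok (avail : nat -> Prop) (y : cantor) (f : nat -> nat) (p : nat) : Prop :=
  y (npair p (wlabel f p)) = true /\
  match nfst (wlabel f p) with
  | 1 => avail (child p 0) -> wtruth f (child p 0) = negb (wtruth f p)
  | 2 => (wtruth f p = true -> avail (child p (windex f p)) ->
            wtruth f (child p (windex f p)) = true) /\
         (wtruth f p = false -> forall i, avail (child p i) -> wtruth f (child p i) = false)
  | 3 => wtruth f p = Bool.eqb (y (nfst (nsnd (wlabel f p)))) (nsnd (nsnd (wlabel f p)) =? 1)
  | _ => True
  end.

Definition consistent_below (y : cantor) (f : nat -> nat) (k : nat) : Prop :=
  (0 < k -> wtruth f 0 = false) /\ forall p, p < k -> node_ok (fun q => q < k) y f p.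

Definition consistent (y : cantor) (f : nat -> nat) : Prop :=
  wtruth f 0 = false /\ forall p, node_ok (fun _ => True) y f p.

Definition diag (y : cantor) : Prop := exists f, forall k, consistent_below y f k.

Lemma node_ok_weaken (avail avail' : nat -> Prop) y f p :
  (forall q, avail' q -> avail q) -> node_ok avail y f p -> node_ok avail' y f p.
Proof.
  intros Hsub [Hlabel Hrule]; split; [exact Hlabel|].
  destruct (nfst (wlabel f p)) as [|[|[|[|]]]]; auto.
  destruct Hrule as [Htrue Hfalse]; split; auto.
Qed.

Lemma node_ok_limit y f p :
  (forall k, p < k -> node_ok (fun q => q < k) y f p) -> node_ok (fun _ => True) y f p.
Proof.
  intros Hok.
  assert (Hat : forall q, p <= q -> node_ok (fun r => r < S q) y f p) by (intros; apply Hok; lia).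
  destruct (Hat p (le_n p)) as [Hlabel _]; split; [exact Hlabel|].
  pose proof (fun i => Hat (child p i) (Nat.lt_le_incl _ _ (child_gt p i))) as Hchild.
  destruct (nfst (wlabel f p)) as [|[|[|[|]]]] eqn:Ekind; auto.
  - intros _; destruct (Hchild 0) as [_ Hr]; rewrite Ekind in Hr; apply Hr; lia.
  - split.
    + intros Ht _; destruct (Hchild (windex f p)) as [_ Hr]; rewrite Ekind in Hr.
      apply (proj1 Hr Ht); lia.
    + intros Hf i _; destruct (Hchild i) as [_ Hr]; rewrite Ekind in Hr.
      apply (proj2 Hr Hf); lia.
  - destruct (Hat p (le_n p)) as [_ Hr]; rewrite Ekind in Hr; exact Hr.
Qed.

Lemma consistent_below_iff y f : (forall k, consistent_below y f k) <-> consistent y f.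
Proof.
  split.
  - intros Hk; split.
    + apply (proj1 (Hk 1)); lia.
    + intros p; apply node_ok_limit; intros k Hpk; apply (proj2 (Hk k) p Hpk).
  - intros [Hroot Hok] k; split; [auto|].
    intros p _; apply (node_ok_weaken (fun _ => True)); auto.
Qed.

Section Evaluation.

Variable c : bcode.

Lemma consistent_enc_label f p d :
  consistent (enc c) f -> code_at c p = Some d -> wlabel f p = code_label d.
Proof.
  intros [_ Hok] Hp; destruct (Hok p) as [Hlabel _].
  rewrite enc_npair in Hlabel; apply Nat.eqb_eq in Hlabel.
  unfold label_at in Hlabel; rewrite Hp in Hlabel; exact Hlabel.
Qed.

Lemma consistent_enc_truth f d p :
  consistent (enc c) f -> code_at c p = Some d -> (wtruth f p = true <-> bsat d (enc c)).
Proof.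
  intros Hcons; revert p; induction d as [n b|d IH|g IH]; intros p Hp;
    pose proof (proj2 (proj2 Hcons p)) as Hrule;
    rewrite (consistent_enc_label f p _ Hcons Hp) in Hrule; unfold code_label in Hrule;
    autorewrite with npair in Hrule; simpl in Hrule |- *.
  - rewrite Hrule, Bool.eqb_true_iff; destruct b; reflexivity.
  - rewrite <- (IH _ (code_at_compl c p d 0 Hp)), (Hrule I).
    destruct (wtruth f p); simpl; intuition discriminate.
  - destruct Hrule as [Htrue Hfalse]; split.
    + intros Ht; exists (windex f p).
      apply (IH _ _ (code_at_union c p g _ Hp)), (Htrue Ht I).
    + intros [i Hi]; apply (IH _ _ (code_at_union c p g i Hp)) in Hi.
      destruct (wtruth f p); [reflexivity|].
      rewrite (Hfalse eq_refl i I) in Hi; discriminate.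
Qed.

Definition truth_bit (d : bcode) (z : cantor) : nat :=
  if excluded_middle_informative (bsat d z) then 1 else 0.

Definition true_branch (d : bcode) (z : cantor) : nat :=
  match d with BUnion g => epsilon (inhabits 0) (fun i => bsat (g i) z) | _ => 0 end.

Definition eval_witness (z : cantor) (p : nat) : nat :=
  match code_at c p with
  | Some d => npair (code_label d) (npair (truth_bit d z) (true_branch d z))
  | None => 0
  end.

Lemma eval_witness_label z p d :
  code_at c p = Some d -> wlabel (eval_witness z) p = code_label d.
Proof. intros Hp; unfold wlabel, eval_witness; rewrite Hp, nfst_npair; reflexivity. Qed.

Lemma eval_witness_truth z p d :
  code_at c p = Some d -> (wtruth (eval_witness z) p = true <-> bsat d z).
Proof.
  intros Hp; unfold wtruth, eval_witness; rewrite Hp, nsnd_npair, nfst_npair.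
  unfold truth_bit; destruct excluded_middle_informative; simpl; intuition discriminate.
Qed.

Lemma eval_witness_index z p d :
  code_at c p = Some d -> windex (eval_witness z) p = true_branch d z.
Proof. intros Hp; unfold windex, eval_witness; rewrite Hp, !nsnd_npair; reflexivity. Qed.

Lemma eval_witness_node_ok p : node_ok (fun _ => True) (enc c) (eval_witness (enc c)) p.
Proof.
  destruct (code_at c p) as [d|] eqn:Hp.
  2: { unfold node_ok, wlabel, eval_witness; rewrite Hp; split; [|exact I].
       rewrite enc_npair; unfold label_at; rewrite Hp; reflexivity. }
  split.
  { rewrite enc_npair, (eval_witness_label _ _ _ Hp).
    unfold label_at; rewrite Hp; apply Nat.eqb_refl. }
  rewrite (eval_witness_label _ _ _ Hp).
  destruct d as [n b|d|g]; unfold code_label; autorewrite with npair.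
  - apply eq_true_iff_eq; rewrite (eval_witness_truth _ _ _ Hp), Bool.eqb_true_iff.
    destruct b; reflexivity.
  - intros _; apply eq_true_iff_eq.
    rewrite (eval_witness_truth _ _ _ (code_at_compl c p d 0 Hp)), negb_true_iff,
      <- not_true_iff_false, (eval_witness_truth _ _ _ Hp).
    simpl; destruct (classic (bsat d (enc c))); tauto.
  - split.
    + intros Ht _; apply (eval_witness_truth _ _ _ (code_at_union c p g _ Hp)).
      rewrite (eval_witness_index _ _ _ Hp); simpl; apply epsilon_spec.
      exact (proj1 (eval_witness_truth _ _ _ Hp) Ht).
    + intros Hf i _; apply not_true_iff_false.
      rewrite (eval_witness_truth _ _ _ (code_at_union c p g i Hp)).
      intros Hi; apply not_true_iff_false in Hf; apply Hf, (eval_witness_truth _ _ _ Hp).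
      exists i; exact Hi.
Qed.

Lemma diag_enc : diag (enc c) <-> ~ bsat c (enc c).
Proof.
  unfold diag; setoid_rewrite consistent_below_iff; split.
  - intros [f Hcons] Hc.
    apply (consistent_enc_truth f c 0 Hcons (code_at_root c)) in Hc.
    rewrite (proj1 Hcons) in Hc; discriminate.
  - intros Hnc; exists (eval_witness (enc c)); split; [|apply eval_witness_node_ok].
    apply not_true_iff_false; rewrite (eval_witness_truth _ _ _ (code_at_root c)); exact Hnc.
Qed.

End Evaluation.

Lemma diag_not_borel : ~ borel diag.
Proof.
  intros Hb; destruct (borel_has_code _ Hb) as [c Hc].
  pose proof (diag_enc c) as Hdiag; rewrite Hc in Hdiag; tauto.
Qed.

Lemma consistent_below_mono y f k k' :
  k' <= k -> consistent_below y f k -> consistent_below y f k'.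
Proof.
  intros Hk [Hroot Hok]; split; [intros; apply Hroot; lia|].
  intros p Hp; apply (node_ok_weaken (fun q => q < k)); [intros; lia | apply Hok; lia].
Qed.

Lemma consistent_below_ext y f g k :
  (forall j, j < k -> f j = g j) -> consistent_below y f k -> consistent_below y g k.
Proof.
  intros E [Hroot Hok].
  assert (Et : forall q, q < k -> wtruth g q = wtruth f q)
    by (intros; unfold wtruth; rewrite E; auto).
  split; [intros; rewrite Et; auto|].
  intros p Hp; destruct (Hok p Hp) as [Hlabel Hrule].
  assert (El : wlabel g p = wlabel f p) by (unfold wlabel; rewrite E; auto).
  assert (Ei : windex g p = windex f p) by (unfold windex; rewrite E; auto).
  unfold node_ok; rewrite El, Ei, (Et p Hp).
  split; [exact Hlabel|].
  destruct (nfst (wlabel f p)) as [|[|[|[|]]]]; auto.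
  - intros Hc; rewrite Et by exact Hc; auto.
  - destruct Hrule as [Htrue Hfalse]; split.
    + intros Ht Hc; rewrite Et by exact Hc; auto.
    + intros Hf i Hc; rewrite Et by exact Hc; auto.
Qed.

(* [window v] bounds every bit of y read by [consistent_below y f k]
   when k and the values of f are bounded by v. *)
Definition window (v : nat) : nat := S (npair v v).

Lemma consistent_below_transfer y y' f k v :
  (forall j, j < k -> f j <= v) -> k <= S v -> agree_below (window v) y y' ->
  consistent_below y f k -> consistent_below y' f k.
Proof.
  intros Hf Hk Hyy' [Hroot Hok]; split; [exact Hroot|].
  intros p Hp; destruct (Hok p Hp) as [Hlabel Hrule].
  assert (Hl : wlabel f p <= v)
    by (pose proof (nfst_le (f p)); pose proof (Hf p Hp); unfold wlabel; lia).
  split.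
  - rewrite <- Hyy'; [exact Hlabel|].
    pose proof (npair_le_mono p (wlabel f p) v v ltac:(lia) Hl); unfold window; lia.
  - destruct (nfst (wlabel f p)) as [|[|[|[|]]]]; auto.
    rewrite Hrule, Hyy'; [reflexivity|].
    pose proof (nfst_le (nsnd (wlabel f p))); pose proof (nsnd_le (wlabel f p)).
    pose proof (npair_ge v v); unfold window; lia.
Qed.

Fixpoint prefix_code (y : cantor) (N : nat) : nat :=
  match N with 0 => 0 | S N => npair (prefix_code y N) (Nat.b2n (y N)) end.

Lemma prefix_code_agree y y' N : agree_below N y y' -> prefix_code y N = prefix_code y' N.
Proof.
  induction N as [|N IH]; intros Hyy'; simpl; [reflexivity|].
  rewrite IH, (Hyy' N) by (lia || (intros q Hq; apply Hyy'; lia)); reflexivity.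
Qed.

Lemma prefix_code_inj y y' N : prefix_code y N = prefix_code y' N -> agree_below N y y'.
Proof.
  induction N as [|N IH]; intros E q Hq; simpl in E; [lia|].
  apply npair_inj in E as [E1 E2].
  destruct (Nat.eq_dec q N) as [->|Hne].
  - destruct (y N), (y' N); simpl in E2; congruence.
  - apply IH; [exact E1 | lia].
Qed.

Definition code_pt (y : cantor) (v : nat) : nat := npair v (prefix_code y (window v)).

Definition code_set (y : cantor) : cantor :=
  fun m => nsnd m =? prefix_code y (window (nfst m)).

Lemma nfst_code_pt y v : nfst (code_pt y v) = v.
Proof. apply nfst_npair. Qed.

Lemma code_pt_ge y v : v <= code_pt y v.
Proof. pose proof (npair_ge v (prefix_code y (window v))); unfold code_pt; lia. Qed.

Lemma code_set_pt y v : code_set y (code_pt y v) = true.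
Proof. unfold code_set, code_pt; autorewrite with npair; apply Nat.eqb_refl. Qed.

Lemma code_set_elim y m : code_set y m = true -> m = code_pt y (nfst m).
Proof.
  unfold code_set, code_pt; intros E; apply Nat.eqb_eq in E.
  rewrite <- E; symmetry; apply npair_nfst_nsnd.
Qed.

Lemma code_set_agree y y' v : code_set y (code_pt y' v) = true -> agree_below (window v) y y'.
Proof.
  unfold code_set, code_pt; autorewrite with npair; intros E; apply Nat.eqb_eq in E.
  intros q Hq; symmetry; apply (prefix_code_inj _ _ _ E); exact Hq.
Qed.

Lemma code_set_infinite y : infinite_set (code_set y).
Proof. intros n; exists (code_pt y n); split; [apply code_pt_ge | apply code_set_pt]. Qed.

Lemma borel_fun_code_set : borel_fun code_set.
Proof.
  apply borel_fun_continuous; intros m; exists (window (nfst m)); intros y y' Hyy'.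
  unfold code_set; rewrite (prefix_code_agree _ _ _ Hyy'); reflexivity.
Qed.

Lemma common_bound (Q : nat -> nat -> Prop) B :
  (forall i m m', m <= m' -> Q i m -> Q i m') ->
  (forall i, i <= B -> exists m, Q i m) -> exists M, forall i, i <= B -> Q i M.
Proof.
  intros Hmono; induction B as [|B IH]; intros HB.
  - destruct (HB 0 (le_n 0)) as [m Hm]; exists m; intros i Hi.
    replace i with 0 by lia; exact Hm.
  - destruct IH as [M HM]; [intros; apply HB; lia|].
    destruct (HB (S B) (le_n _)) as [m Hm]; exists (max M m); intros i Hi.
    destruct (Nat.eq_dec i (S B)) as [->|Hne].
    + apply (Hmono _ m); [lia | exact Hm].
    + apply (Hmono _ M); [lia | apply HM; lia].
Qed.

Section Konig.

Variable T : (nat -> nat) -> nat -> Prop.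
Hypothesis T_mono : forall f k k', k' <= k -> T f k -> T f k'.
Hypothesis T_ext : forall f g k, (forall j, j < k -> f j = g j) -> T f k -> T g k.
Variable bound : nat -> nat.
Hypothesis T_bounded : forall f k j, T f k -> j < k -> f j <= bound j.
Hypothesis T_levels : forall k, exists f, T f k.

Definition extendable (f : nat -> nat) (k : nat) : Prop :=
  forall m, k <= m -> exists g, (forall j, j < k -> g j = f j) /\ T g m.

Lemma extendable_step f k : extendable f k -> exists i, extendable (upd f k i) (S k).
Proof.
  intros Hext; apply NNPP; intros Hno.
  set (stuck := fun i m => S k <= m /\
                  ~ exists g, (forall j, j < S k -> g j = upd f k i j) /\ T g m).
  destruct (common_bound stuck (bound k)) as [M HM].
  - intros i m m' Hmm' [Hkm Hng]; split; [lia|].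
    intros [g [Hg HT]]; apply Hng; exists g; split; [exact Hg | exact (T_mono _ _ _ Hmm' HT)].
  - intros i _; apply NNPP; intros Hall; apply Hno; exists i.
    intros m Hm; apply NNPP; intros Hg; apply Hall; exists m; split; assumption.
  - destruct (HM 0 (Nat.le_0_l _)) as [HkM _].
    destruct (Hext M ltac:(lia)) as [g [Hg HT]].
    apply (proj2 (HM (g k) (T_bounded g M k HT ltac:(lia)))).
    exists g; split; [|exact HT].
    intros j Hj; unfold upd; destruct (Nat.eqb_spec j k) as [->|Hne];
      [reflexivity | apply Hg; lia].
Qed.

Definition next_value (f : nat -> nat) (k : nat) : nat :=
  epsilon (inhabits 0) (fun i => extendable (upd f k i) (S k)).

Fixpoint approx (n : nat) : nat -> nat :=
  match n with 0 => fun _ => 0 | S n => upd (approx n) n (next_value (approx n) n) end.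

Lemma approx_extendable n : extendable (approx n) n.
Proof.
  induction n as [|n IH].
  - intros m _; destruct (T_levels m) as [g Hg]; exists g; split; [intros; lia | exact Hg].
  - apply (epsilon_spec (inhabits 0) (fun i => extendable (upd (approx n) n i) (S n))).
    apply extendable_step, IH.
Qed.

Lemma approx_stable j n : j < n -> approx n j = approx (S j) j.
Proof.
  induction n as [|n IH]; intros Hj; [lia|].
  destruct (Nat.eq_dec j n) as [->|Hne]; [reflexivity|].
  simpl; unfold upd; destruct (Nat.eqb_spec j n); [lia|].
  apply IH; lia.
Qed.

Theorem konig : exists b, forall k, T b k.
Proof.
  exists (fun j => approx (S j) j); intros k.
  destruct (approx_extendable k k (le_n k)) as [g [Hg HT]].
  apply (T_ext g); [|exact HT].
  intros j Hj; rewrite Hg by exact Hj; apply approx_stable, Hj.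
Qed.

End Konig.

Definition increasing (t : nat -> nat) : Prop := forall j, t j < t (S j).

Lemma increasing_le t i j : increasing t -> i <= j -> t i <= t j.
Proof. intros Ht Hij; induction Hij as [|j _ IH]; [lia | specialize (Ht j); lia]. Qed.

Lemma increasing_ge_id t j : increasing t -> j <= t j.
Proof. intros Ht; induction j as [|j IH]; [lia | specialize (Ht j); lia]. Qed.

Lemma increasing_dominated e t k :
  increasing e -> increasing t -> (forall j, j < k -> exists i, t j = e i) ->
  forall j, j < k -> e j <= t j.
Proof.
  intros He Ht Hrange j; induction j as [|j IH]; intros Hj;
    destruct (Hrange _ Hj) as [i Ei]; rewrite Ei; apply increasing_le; auto; [lia|].
  specialize (IH ltac:(lia)); specialize (Ht j).
  destruct (le_lt_dec (S j) i) as [Hle|Hlt]; [exact Hle|].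
  pose proof (increasing_le e i j He ltac:(lia)); lia.
Qed.

Fixpoint enum_above (g b : nat -> nat) (j : nat) : nat :=
  match j with
  | 0 => g (b 0)
  | S j => g (max (S (enum_above g b j)) (b (S j)))
  end.

Lemma increasing_enum (P : nat -> Prop) (b : nat -> nat) :
  (forall n, exists v, n <= v /\ P v) -> exists e, increasing e /\ forall j, b j <= e j /\ P (e j).
Proof.
  intros HP; destruct (choice _ HP) as [g Hg]; exists (enum_above g b).
  split; [intros j | intros [|j]]; cbn [enum_above];
    match goal with |- context [g ?n] => destruct (Hg n) end.
  - lia.
  - split; [lia | assumption].
  - split; [lia | assumption].
Qed.

Definition listed (g : nat -> nat) (k : nat) : cantor :=
  fun m => existsb (fun j => m =? g j) (seq 0 k).

Lemma listed_spec g k m : listed g k m = true <-> exists j, j < k /\ m = g j.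
Proof.
  unfold listed; rewrite existsb_exists; split; intros [j [Hj E]]; exists j.
  - apply in_seq in Hj; apply Nat.eqb_eq in E; split; [lia | exact E].
  - split; [apply in_seq; lia | apply Nat.eqb_eq, E].
Qed.

Lemma listed_finite g k : finite_set (listed g k).
Proof.
  assert (Hbound : exists M, forall j, j < k -> g j < M).
  { induction k as [|k [M HM]]; [exists 0; lia|].
    exists (max M (S (g k))); intros j Hj.
    destruct (Nat.eq_dec j k) as [->|Hne]; [lia | specialize (HM j ltac:(lia)); lia]. }
  destruct Hbound as [M HM]; exists M; intros m Hm.
  apply listed_spec in Hm as [j [Hj ->]]; auto.
Qed.

Lemma init_seg_subset s z : init_seg s z -> subset s z.
Proof. intros [n Hn] m Hm; rewrite Hn in Hm; apply andb_prop in Hm; tauto. Qed.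

Definition bounded_witness (y : cantor) (t : nat -> nat) (k : nat) : Prop :=
  exists f, (forall j, j < k -> f j <= t j) /\ consistent_below y f k.

Definition unwitnessed (s : cantor) : Prop :=
  exists y t k, increasing t /\ s = listed (fun j => code_pt y (t j)) k /\
    ~ bounded_witness y t k.

Lemma unwitnessed_finite : family_of_finite unwitnessed.
Proof. intros s [y [t [k [_ [-> _]]]]]; apply listed_finite. Qed.

Lemma code_subset_unbounded y Z :
  subset Z (code_set y) -> infinite_set Z ->
  forall n, exists v, n <= v /\ Z (code_pt y v) = true.
Proof.
  intros Hsub Hinf n.
  destruct (listed_finite (code_pt y) n) as [M HM]; destruct (Hinf M) as [m [HMm Zm]].
  pose proof (code_set_elim y m (Hsub m Zm)) as Em.
  exists (nfst m); rewrite <- Em; split; [|exact Zm].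
  destruct (le_lt_dec n (nfst m)) as [Hle|Hlt]; [exact Hle|].
  assert (Hl : listed (code_pt y) n m = true) by (apply listed_spec; eauto).
  apply HM in Hl; lia.
Qed.

(* Koenig's lemma, with the branching bounded by an increasing enumeration of Z. *)
Lemma diag_of_family_free y Z :
  subset Z (code_set y) -> infinite_set Z ->
  (forall s, finite_set s -> subset s Z -> ~ unwitnessed s) -> diag y.
Proof.
  intros Hsub Hinf Hfree.
  destruct (increasing_enum (fun v => Z (code_pt y v) = true) (fun _ => 0)
              (code_subset_unbounded y Z Hsub Hinf)) as [e [He HeZ]].
  assert (Hbw : forall k, bounded_witness y e k).
  { intros k; apply NNPP; intros Hno.
    apply (Hfree (listed (fun j => code_pt y (e j)) k)).
    - apply listed_finite.
    - intros m Hm; apply listed_spec in Hm as [j [_ ->]]; apply HeZ.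
    - exists y, e, k; auto. }
  destruct (konig (fun f k => (forall j, j < k -> f j <= e j) /\ consistent_below y f k))
    with (bound := e) as [b Hb].
  - intros f k k' Hk [Hf Hc]; split;
      [intros; apply Hf; lia | exact (consistent_below_mono _ _ _ _ Hk Hc)].
  - intros f g k E [Hf Hc]; split;
      [intros j Hj; rewrite <- E; auto | exact (consistent_below_ext _ _ _ _ E Hc)].
  - intros f k j [Hf _] Hj; auto.
  - exact Hbw.
  - exists b; intros k; apply Hb.
Qed.

(* Thinning Z out along an enumeration that dominates a witness b for y: then b
   itself witnesses every candidate member of the family inside the thinned set. *)
Lemma family_free_subset y Z :
  diag y -> subset Z (code_set y) -> infinite_set Z ->
  exists Z', subset Z' Z /\ infinite_set Z' /\ forall s, subset s Z' -> ~ unwitnessed s.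
Proof.
  intros [b Hb] Hsub Hinf.
  destruct (increasing_enum (fun v => Z (code_pt y v) = true) b
              (code_subset_unbounded y Z Hsub Hinf)) as [e [He HeZ]].
  set (pts := fun j => code_pt y (e j)).
  assert (Hpts : forall m, listed pts (S m) m = true <-> exists j, m = pts j).
  { intros m; rewrite listed_spec; split; [intros [j [_ E]]; eauto|].
    intros [j E]; exists j; split; [|exact E].
    pose proof (increasing_ge_id e j He); pose proof (code_pt_ge y (e j)); unfold pts in E; lia. }
  exists (fun m => listed pts (S m) m); split; [|split].
  - intros m Hm; apply Hpts in Hm as [j ->]; apply HeZ.
  - intros n; exists (pts n); split; [|apply Hpts; eauto].
    pose proof (increasing_ge_id e n He); pose proof (code_pt_ge y (e n)); unfold pts; lia.
  - intros s Hs [y' [t [k [Ht [-> Hno]]]]]; apply Hno.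
    assert (Hin : forall j, j < k -> exists i, code_pt y' (t j) = pts i)
      by (intros j Hj; apply Hpts, Hs, listed_spec; eauto).
    destruct k as [|k]; [exists b; split; [intros; lia | split; intros; lia]|].
    assert (Hdom : forall j, j < S k -> b j <= t j).
    { intros j Hj; transitivity (e j); [apply HeZ|].
      apply (increasing_dominated e t (S k) He Ht); [|exact Hj].
      intros i Hi; destruct (Hin i Hi) as [i' E]; exists i'.
      apply (f_equal nfst) in E; unfold pts in E; rewrite !nfst_code_pt in E; exact E. }
    exists b; split; [exact Hdom|].
    apply (consistent_below_transfer y y' b (S k) (t k)); [| | |apply Hb].
    + intros j Hj; transitivity (t j); [auto | apply increasing_le; auto; lia].
    + pose proof (increasing_ge_id t k Ht); lia.
    + destruct (Hin k (le_n _)) as [i E]; apply code_set_agree.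
      rewrite E; apply code_set_pt.
Qed.

Lemma borel_finite_subset_in (F : cantor -> Prop) :
  borel (fun w => exists s, finite_set s /\ subset s w /\ F s).
Proof.
  apply borel_ext with
    (A := fun w => exists N s, (forall m, s m = true -> m < N) /\ subset s w /\ F s).
  - apply borel_union; intros N; apply (borel_finitely_determined N).
    intros w w' Hww' [s [HN [Hs HF]]]; exists s; split; [exact HN | split; [|exact HF]].
    intros m Hm; rewrite <- Hww' by (apply HN, Hm); apply Hs, Hm.
  - intros w; split.
    + intros [N [s [HN [Hs HF]]]]; exists s; split; [exists N; exact HN | auto].
    + intros [s [[N HN] [Hs HF]]]; exists N, s; auto.
Qed.

Lemma homogeneous_code_subset y w :
  subset w (code_set y) -> infinite_set w -> homogeneous unwitnessed w ->
  ((exists s, finite_set s /\ subset s w /\ unwitnessed s) <-> ~ diag y).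
Proof.
  intros Hsub Hinf Hhom; split.
  - intros [s [Hfin [Hs Hu]]] Hd.
    destruct (family_free_subset y w Hd Hsub Hinf) as [Z' [HZ' [HZ'inf Hfree]]].
    destruct Hhom as [Hall|Hnone].
    + destruct (Hall Z' HZ' HZ'inf) as [s' [Hu' Hseg]].
      exact (Hfree s' (init_seg_subset _ _ Hseg) Hu').
    + exact (Hnone s Hfin Hs Hu).
  - intros Hnd; apply NNPP; intros Hno; apply Hnd.
    apply (diag_of_family_free y w Hsub Hinf).
    intros s Hfin Hs Hu; apply Hno; eauto.
Qed.

Theorem mainTheorem3 :
  exists F : cantor -> Prop,
    family_of_finite F /\
    ~ (exists S : cantor -> cantor,
          borel_fun S /\
          forall x : cantor, infinite_set x ->
            subset (S x) x /\ infinite_set (S x) /\ in_hom F (S x)).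
Proof.
  exists unwitnessed; split; [exact unwitnessed_finite|].
  intros [S [HS Hsel]]; apply diag_not_borel.
  set (meets_family := fun w => exists s, finite_set s /\ subset s w /\ unwitnessed s).
  apply borel_ext with (A := fun y => ~ meets_family (S (code_set y))).
  - apply borel_compl, (borel_fun_code_set (fun x => meets_family (S x))), HS.
    apply borel_finite_subset_in.
  - intros y; destruct (Hsel (code_set y) (code_set_infinite y)) as [Hsub [_ [Hinf Hhom]]].
    unfold meets_family; rewrite (homogeneous_code_subset y _ Hsub Hinf Hhom).
    destruct (classic (diag y)); tauto.
Qed.
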